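(* For any integers $k>n\geq 1$, the following identity holds in $\mathbb{R}[t]$: \[ \sum_{\substack{k_1\geq 2,\ k_2,\ldots,k_n\geq 1,\\ k_1+\cdots+k_n=k}}\zeta^t(k_1,\ldots,k_n) =\Biggl(\sum_{j=0}^{n-1}\binom{k-1}{j}t^j(1-t)^{n-1-j}\Biggr)\zeta(k). \]
   Context: For integers $k_1\geq 2$, $k_2,\ldots,k_n\geq 1$, the multiple zeta value is $\zeta(k_1,\ldots,k_n)=\sum_{m_1>\cdots>m_n>0}m_1^{-k_1}\cdots m_n^{-k_n}$. For such an index, let $\mathbf{p}$ run over all $2^{n-1}$ indices of the form $(k_1\square k_2\square\cdots\square k_n)$ where each $\square$ is filled either by a comma or by a plus sign (plus signs meaning the adjacent entries are added), and let $\sigma(\mathbf{p})$ be the number of plus signs used. Define the polynomial $\zeta^t(k_1,\ldots,k_n)=\sum_{\mathbf{p}}t^{\sigma(\mathbf{p})}\zeta(\mathbf{p})\in\mathbb{R}[t]$ in an indeterminate $t$ (so $\zeta^0$ is the multiple zeta value and $\zeta^1$ the multiple zeta-star value $\sum_{m_1\geq\cdots\geq m_n>0}m_1^{-k_1}\cdots m_n^{-k_n}$). *)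

From Stdlib Require Import Reals List Arith ClassicalEpsilon.
Import ListNotations.
Open Scope R_scope.

Fixpoint sumR (n : nat) (f : nat -> R) : R :=
  match n with
  | O => 0
  | S n' => sumR n' f + f (S n')
  end.

(* Truncated multiple zeta sum over N >= m1 > m2 > ... > mn > 0. *)
Fixpoint mzv_trunc (ks : list nat) (N : nat) : R :=
  match ks with
  | [] => 1
  | k :: ks' => sumR N (fun m => / (INR m) ^ k * mzv_trunc ks' (m - 1))
  end.

(* Limit of a sequence if it converges (0 otherwise). *)
Definition lim_or0 (u : nat -> R) : R :=
  match excluded_middle_informative (exists l, Un_cv u l) with
  | left H => proj1_sig (constructive_indefinite_description _ H)
  | right _ => 0
  end.

(* Multiple zeta value zeta(k1,...,kn) (convergent for k1 >= 2). *)
Definition mzv (ks : list nat) : R := lim_or0 (mzv_trunc ks).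

(* All indices (k1 [] k2 [] ... [] kn), each [] a comma or a plus,
   paired with the number of plus signs used. *)
Fixpoint merges (ks : list nat) : list (list nat * nat) :=
  match ks with
  | [] => [([], O)]
  | k :: ks' =>
      match ks' with
      | [] => [([k], O)]
      | _ => flat_map (fun ps =>
               match fst ps with
               | [] => []
               | q :: qs => [(k :: q :: qs, snd ps); ((k + q)%nat :: qs, S (snd ps))]
               end) (merges ks')
      end
  end.

Definition sum_list (l : list R) : R := fold_right Rplus 0 l.

(* zeta^t(k1,...,kn) evaluated at t. *)
Definition zeta_t (t : R) (ks : list nat) : R :=
  sum_list (map (fun ps => t ^ (snd ps) * mzv (fst ps)) (merges ks)).

Fixpoint comps (n k : nat) : list (list nat) :=
  match n with
  | O => if Nat.eqb k 0 then [[]] else []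
  | S n' => flat_map (fun a => map (cons a) (comps n' (k - a))) (seq 1 k)
  end.

Definition adm_comps (n k : nat) : list (list nat) :=
  filter (fun ks => match ks with [] => false | k1 :: _ => Nat.leb 2 k1 end)
         (comps n k).

(* Combinatorics: every admissible index is [bump_head c] for a composition
   [c] of [k - 1]; expanding the merges and regrouping by the merged index
   gives [sum_(m = 1..n) t^(n-m) binom(k-1-m, n-m) S(m, k)], with [S(m, k)]
   the sum of admissible MZVs of depth [m] and weight [k]
   ([adm_merge_sum_expand]); these coefficients add up to the polynomial of
   the statement ([coef_total]).
   Analysis: the sum formula [S(m, k) = zeta(k)] ([sum_formula]).  For
   [0 <= x <= 1/2], two truncated sums built from the weights [1/(m - x)]
   have as [x]-expansion coefficients the truncated [S(d, d + 1 + h)] and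
   [zeta(d + 1 + h)]; the connector [P(m) P(n) / P(m + n)],
   [P(k) = (1-x)...(k-x)], shows that they have the same limit
   ([lhs_rhs_gen_lim]); monotone convergence and the identity theorem for
   power series with nonnegative coefficients ([pseries_coef_unique]) then
   identify the coefficients. *)

From Stdlib Require Import Reals List Arith ClassicalEpsilon Lra Lia.
From Coquelicot Require Import Rcomplements Rbar Lim_seq Series PSeries Hierarchy Continuity.
Import ListNotations.
Open Scope R_scope.

Lemma sumR_S n f : sumR (S n) f = sumR n f + f (S n).
Proof. reflexivity. Qed.

Lemma sumR_ext n f g :
  (forall m, (1 <= m <= n)%nat -> f m = g m) -> sumR n f = sumR n g.
Proof.
  induction n as [|n IH]; intros H; simpl; auto.
  rewrite IH by (intros; apply H; lia). rewrite H by lia. reflexivity.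
Qed.

Lemma sumR_plus n f g : sumR n (fun m => f m + g m) = sumR n f + sumR n g.
Proof. induction n; simpl; [lra|]. rewrite IHn; lra. Qed.

Lemma sumR_scal n c f : sumR n (fun m => c * f m) = c * sumR n f.
Proof. induction n; simpl; [lra|]. rewrite IHn; lra. Qed.

Lemma sumR_minus n f g : sumR n (fun m => f m - g m) = sumR n f - sumR n g.
Proof. induction n; simpl; [lra|]. rewrite IHn; lra. Qed.

Lemma sumR_zero n f : (forall m, (1 <= m <= n)%nat -> f m = 0) -> sumR n f = 0.
Proof.
  induction n as [|n IH]; intros H; simpl; auto.
  rewrite IH by (intros; apply H; lia). rewrite H by lia. ring.
Qed.

Lemma sumR_shift n f : sumR (S n) f = f 1%nat + sumR n (fun m => f (S m)).
Proof.
  induction n as [|n IH]; [simpl; lra|].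
  rewrite sumR_S, IH, sumR_S. lra.
Qed.

Lemma sumR_add n k f : sumR (n + k) f = sumR n f + sumR k (fun i => f (n + i)%nat).
Proof.
  induction k as [|k IH]; simpl; [rewrite Nat.add_0_r; lra|].
  rewrite Nat.add_succ_r. simpl. rewrite IH. lra.
Qed.

Lemma sumR_const N c : sumR N (fun _ => c) = INR N * c.
Proof. induction N; simpl sumR; [simpl; ring|]. rewrite IHN, S_INR. ring. Qed.

Lemma sumR_swap a b F :
  sumR a (fun i => sumR b (fun j => F i j)) = sumR b (fun j => sumR a (fun i => F i j)).
Proof.
  induction a as [|a IH]; simpl.
  - symmetry; apply sumR_zero; auto.
  - rewrite IH, <- sumR_plus. reflexivity.
Qed.

Lemma sumR_nonneg n f : (forall m, (1 <= m <= n)%nat -> 0 <= f m) -> 0 <= sumR n f.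
Proof.
  induction n as [|n IH]; simpl; intros H; [lra|].
  assert (0 <= f (S n)) by (apply H; lia).
  assert (0 <= sumR n f) by (apply IH; intros; apply H; lia). lra.
Qed.

Lemma sumR_le n f g :
  (forall m, (1 <= m <= n)%nat -> f m <= g m) -> sumR n f <= sumR n g.
Proof.
  induction n as [|n IH]; simpl; intros H; [lra|].
  assert (f (S n) <= g (S n)) by (apply H; lia).
  assert (sumR n f <= sumR n g) by (apply IH; intros; apply H; lia). lra.
Qed.

Lemma sum_f_R0_sumR F h : sum_f_R0 F h = sumR (S h) (fun a => F (a - 1)%nat).
Proof.
  induction h as [|h IH]; [simpl; lra|].
  rewrite tech5, IH, (sumR_S (S h)). replace (S (S h) - 1)%nat with (S h) by lia. reflexivity.
Qed.

Lemma sum_list_app l1 l2 : sum_list (l1 ++ l2) = sum_list l1 + sum_list l2.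
Proof. induction l1; simpl; [lra|]. rewrite IHl1; lra. Qed.

Lemma sum_list_map_plus {A} (f g : A -> R) l :
  sum_list (map (fun a => f a + g a) l) = sum_list (map f l) + sum_list (map g l).
Proof. induction l; simpl; [lra|]. rewrite IHl; lra. Qed.

Lemma sum_list_map_scal {A} c (f : A -> R) l :
  sum_list (map (fun a => c * f a) l) = c * sum_list (map f l).
Proof. induction l; simpl; [lra|]. rewrite IHl; lra. Qed.

Lemma sum_list_map_ext {A} (f g : A -> R) l :
  (forall a, In a l -> f a = g a) -> sum_list (map f l) = sum_list (map g l).
Proof. induction l; simpl; intros H; auto. rewrite H, IHl; auto. Qed.

Lemma sum_list_flat_map {A B} (f : B -> R) (g : A -> list B) l :
  sum_list (map f (flat_map g l)) = sum_list (map (fun a => sum_list (map f (g a))) l).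
Proof. induction l; simpl; auto. rewrite map_app, sum_list_app, IHl. reflexivity. Qed.

Lemma sum_list_seq1 (f : nat -> R) n : sum_list (map f (seq 1 n)) = sumR n f.
Proof. induction n; [reflexivity|]. rewrite seq_S, map_app, sum_list_app, IHn. simpl. lra. Qed.

Lemma sum_list_map_sumR {A} (F : nat -> A -> R) n l :
  sum_list (map (fun a => sumR n (fun m => F m a)) l) =
  sumR n (fun m => sum_list (map (F m) l)).
Proof.
  induction l; simpl; [symmetry; apply sumR_zero; auto|].
  rewrite IHl, <- sumR_plus. reflexivity.
Qed.

Lemma sum_list_map_le {A} (f g : A -> R) l :
  (forall a, In a l -> f a <= g a) -> sum_list (map f l) <= sum_list (map g l).
Proof.
  induction l; simpl; intros H; [lra|].
  assert (f a <= g a) by auto.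
  assert (sum_list (map f l) <= sum_list (map g l)) by auto. lra.
Qed.

Lemma sum_list_map_nonneg {A} (f : A -> R) l :
  (forall a, In a l -> 0 <= f a) -> 0 <= sum_list (map f l).
Proof.
  intros H. replace 0 with (sum_list (map (fun _ : A => 0) l)).
  - apply sum_list_map_le. exact H.
  - induction l; simpl; [reflexivity|]. rewrite IHl; [ring|]. intros; apply H; simpl; auto.
Qed.

Lemma sum_list_map_single_le {A} (f : A -> R) l a :
  (forall b, In b l -> 0 <= f b) -> In a l -> f a <= sum_list (map f l).
Proof.
  induction l as [|b l IH]; simpl; intros H Ha; [contradiction|].
  assert (0 <= f b) by auto.
  assert (0 <= sum_list (map f l)) by (apply sum_list_map_nonneg; auto).
  destruct Ha as [->|Ha]; [lra|].
  assert (f a <= sum_list (map f l)) by auto. lra.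
Qed.

(* Raising the first entry of an index by one; it maps the compositions of
   [k] onto the admissible compositions of [k + 1]. *)
Definition bump_head (l : list nat) : list nat :=
  match l with [] => [] | a :: l' => S a :: l' end.

Fixpoint binom (n k : nat) : nat :=
  match k with
  | O => 1%nat
  | S k' => match n with O => 0%nat | S n' => (binom n' k' + binom n' (S k'))%nat end
  end.

Lemma binom_0 n : binom n 0 = 1%nat.
Proof. destruct n; reflexivity. Qed.

Lemma binom_pascal a b : binom (S a) (S b) = (binom a b + binom a (S b))%nat.
Proof. reflexivity. Qed.

Lemma binom_gt n : forall k, (n < k)%nat -> binom n k = 0%nat.
Proof.
  induction n as [|n IH]; intros k Hk; destruct k as [|k]; try lia; auto.
  simpl. rewrite !IH by lia. reflexivity.
Qed.

Definition comp_sum (m w : nat) (G : list nat -> R) : R := sum_list (map G (comps m w)).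

Lemma comps_0 w : comps 0 w = if Nat.eqb w 0 then [[]] else [].
Proof. reflexivity. Qed.

Lemma comps_small m : forall w, (w < m)%nat -> comps m w = [].
Proof.
  induction m as [|m IH]; intros w H; [lia|]. simpl.
  assert (Hall : forall a, In a (seq 1 w) -> comps m (w - a) = []).
  { intros a Ha. apply in_seq in Ha. apply IH. lia. }
  induction (seq 1 w) as [|a l IHl]; simpl; auto.
  rewrite Hall by (left; auto). apply IHl. intros; apply Hall; right; auto.
Qed.

Lemma comps_head n w c :
  In c (comps (S n) w) -> exists a l, c = a :: l /\ (1 <= a)%nat.
Proof.
  simpl. intros H. apply in_flat_map in H. destruct H as [a [Ha Hc]].
  apply in_map_iff in Hc. destruct Hc as [l [<- _]]. apply in_seq in Ha.
  exists a, l. split; [reflexivity | lia].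
Qed.

Lemma comps_succ n w :
  comps (S n) (S w) = map (cons 1%nat) (comps n w) ++ map bump_head (comps (S n) w).
Proof.
  change (comps (S n) (S w))
    with (flat_map (fun a => map (cons a) (comps n (S w - a))) (seq 1 (S w))).
  rewrite <- cons_seq. simpl flat_map. f_equal.
  - rewrite Nat.sub_0_r. reflexivity.
  - change (comps (S n) w)
      with (flat_map (fun a => map (cons a) (comps n (w - a))) (seq 1 w)).
    rewrite <- seq_shift. induction (seq 1 w) as [|a l IH]; [reflexivity|].
    simpl. rewrite map_app, IH, map_map. reflexivity.
Qed.

Lemma comp_sum_0 w G : comp_sum 0 w G = if Nat.eqb w 0 then G [] else 0.
Proof. unfold comp_sum. rewrite comps_0. destruct (Nat.eqb w 0); simpl; lra. Qed.

Lemma comp_sum_small m w G : (w < m)%nat -> comp_sum m w G = 0.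
Proof. intros H. unfold comp_sum. rewrite comps_small; auto. Qed.

Lemma comp_sum_succ m w G :
  comp_sum (S m) (S w) G =
  comp_sum m w (fun p => G (1%nat :: p)) + comp_sum (S m) w (fun p => G (bump_head p)).
Proof. unfold comp_sum. rewrite comps_succ, map_app, sum_list_app, !map_map. reflexivity. Qed.

Lemma comp_sum_cons j K G :
  comp_sum (S j) K G = sumR K (fun a => comp_sum j (K - a) (fun p => G (a :: p))).
Proof.
  unfold comp_sum.
  change (comps (S j) K) with (flat_map (fun a => map (cons a) (comps j (K - a))) (seq 1 K)).
  rewrite sum_list_flat_map, <- sum_list_seq1. f_equal.
  apply map_ext. intros a. rewrite map_map. reflexivity.
Qed.

Lemma comp_sum_ext j w G1 G2 :
  (forall p, In p (comps j w) -> G1 p = G2 p) -> comp_sum j w G1 = comp_sum j w G2.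
Proof. intros H. apply sum_list_map_ext. exact H. Qed.

Lemma comp_sum_plus j w G1 G2 :
  comp_sum j w (fun p => G1 p + G2 p) = comp_sum j w G1 + comp_sum j w G2.
Proof. apply sum_list_map_plus. Qed.

Lemma comp_sum_scal j w c G : comp_sum j w (fun p => c * G p) = c * comp_sum j w G.
Proof. apply sum_list_map_scal. Qed.

Lemma comp_sum_sumR j w M F :
  comp_sum j w (fun p => sumR M (fun m => F m p)) = sumR M (fun m => comp_sum j w (F m)).
Proof. apply sum_list_map_sumR. Qed.

Lemma comp_sum_nonneg j w G : (forall p, 0 <= G p) -> 0 <= comp_sum j w G.
Proof. intros H. apply sum_list_map_nonneg. intros; apply H. Qed.

Lemma adm_comps_bump n k : adm_comps (S n) (S k) = map bump_head (comps (S n) k).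
Proof.
  unfold adm_comps. rewrite comps_succ, filter_app.
  replace (filter _ (map (cons 1%nat) (comps n k))) with (@nil (list nat))
    by (induction (comps n k); simpl; auto).
  apply forallb_filter_id, forallb_forall. intros c Hc.
  apply in_map_iff in Hc. destruct Hc as [c' [<- Hc']].
  apply comps_head in Hc'. destruct Hc' as [a [l' [-> Ha]]].
  destruct a; [lia|]. reflexivity.
Qed.

Section Merges.
Variable t : R.

(* [merge_sum G c] is [zeta_t] with [mzv] replaced by an arbitrary [G]. *)
Definition merge_sum (G : list nat -> R) (c : list nat) : R :=
  sum_list (map (fun ps => t ^ snd ps * G (fst ps)) (merges c)).

(* The effect of a leading entry [a]: it is joined to the next entry by a
   comma or by a plus sign. *)
Definition glue (a : nat) (G : list nat -> R) (l : list nat) : R :=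
  match l with [] => 0 | q :: qs => G (a :: q :: qs) + t * G ((a + q)%nat :: qs) end.

Definition merge_step (a : nat) (ps : list nat * nat) : list (list nat * nat) :=
  match fst ps with
  | [] => []
  | q :: qs => [(a :: q :: qs, snd ps); ((a + q)%nat :: qs, S (snd ps))]
  end.

Lemma merges_cons_cons a b c :
  merges (a :: b :: c) = flat_map (merge_step a) (merges (b :: c)).
Proof. reflexivity. Qed.

Lemma merges_bump_head c :
  merges (bump_head c) = map (fun ps => (bump_head (fst ps), snd ps)) (merges c).
Proof.
  destruct c as [|a [|b c]]; [reflexivity | reflexivity |].
  change (bump_head (a :: b :: c)) with (S a :: b :: c). rewrite !merges_cons_cons.
  induction (merges (b :: c)) as [|[p s] l IH]; [reflexivity|].
  simpl flat_map. rewrite map_app, IH. destruct p; reflexivity.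
Qed.

Lemma merge_sum_bump_head G c :
  merge_sum G (bump_head c) = merge_sum (fun p => G (bump_head p)) c.
Proof. unfold merge_sum. rewrite merges_bump_head, map_map. reflexivity. Qed.

Lemma merge_sum_cons G a c : c <> [] -> merge_sum G (a :: c) = merge_sum (glue a G) c.
Proof.
  intros Hc. unfold merge_sum. destruct c as [|b c]; [congruence|].
  rewrite merges_cons_cons, sum_list_flat_map. apply sum_list_map_ext.
  intros [[|q qs] s] _; simpl; lra.
Qed.

Lemma merge_sum_single G a : merge_sum G [a] = G [a].
Proof. unfold merge_sum; simpl. lra. Qed.

Definition comp_merge_sum (n w : nat) (G : list nat -> R) : R :=
  sum_list (map (merge_sum G) (comps n w)).

Lemma comp_sum_glue m w G :
  comp_sum (S m) w (glue 1 G) =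
  comp_sum (S m) w (fun p => G (1%nat :: p)) + t * comp_sum (S m) w (fun p => G (bump_head p)).
Proof.
  rewrite <- comp_sum_scal, <- comp_sum_plus. apply comp_sum_ext.
  intros c Hc. apply comps_head in Hc. destruct Hc as [a [l [-> _]]]. reflexivity.
Qed.

Lemma comp_merge_sum_succ n w G :
  comp_merge_sum (S n) (S w) G =
  match n with
  | O => comp_sum 0 w (fun p => G (1%nat :: p))
  | _ => comp_merge_sum n w (glue 1 G)
  end + comp_merge_sum (S n) w (fun p => G (bump_head p)).
Proof.
  unfold comp_merge_sum. rewrite comps_succ, map_app, sum_list_app, !map_map. f_equal.
  - destruct n as [|n].
    + apply sum_list_map_ext. intros c Hc. rewrite comps_0 in Hc.
      destruct (Nat.eqb w 0); simpl in Hc; [|contradiction].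
      destruct Hc as [<-|[]]. apply merge_sum_single.
    + apply sum_list_map_ext. intros c Hc. apply merge_sum_cons.
      apply comps_head in Hc. destruct Hc as [a [l [-> _]]]. congruence.
  - apply sum_list_map_ext. intros c _. apply merge_sum_bump_head.
Qed.

(* The coefficient [t^(n-m) binom(w-m, n-m)] by which depth-[m] terms
   occur when depth-[n] indices of weight [w] are merged. *)
Definition coef (w n m : nat) : R := t ^ (n - m) * INR (binom (w - m) (n - m)).

Lemma coef_diag w n : coef w n n = 1.
Proof. unfold coef. rewrite Nat.sub_diag, binom_0. simpl. lra. Qed.

Lemma coef_shift_sum w n f :
  sumR (S n) (fun m => coef (S w) (S n) m * f (m - 1)%nat) =
  coef (S w) (S n) 1 * f 0%nat + sumR n (fun m => coef w n m * f m).
Proof.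
  rewrite sumR_shift. f_equal. apply sumR_ext. intros m _.
  unfold coef. simpl Nat.sub. rewrite Nat.sub_0_r. reflexivity.
Qed.

Lemma coef_pascal_sum w n f :
  (forall m, (w < m)%nat -> f m = 0) ->
  sumR (S n) (fun m => coef (S w) (S n) m * f m) =
  t * sumR n (fun m => coef w n m * f m) + sumR (S n) (fun m => coef w (S n) m * f m).
Proof.
  intros Hf. rewrite !sumR_S, !coef_diag, <- sumR_scal.
  enough (sumR n (fun m => coef (S w) (S n) m * f m) =
          sumR n (fun m => t * (coef w n m * f m)) + sumR n (fun m => coef w (S n) m * f m))
    by lra.
  rewrite <- sumR_plus. apply sumR_ext. intros m Hm.
  destruct (le_lt_dec m w) as [Hmw|Hmw]; [|rewrite Hf by lia; ring].
  unfold coef. replace (S n - m)%nat with (S (n - m)) by lia.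
  replace (S w - m)%nat with (S (w - m)) by lia.
  rewrite binom_pascal, plus_INR. simpl pow. ring.
Qed.

Lemma comp_merge_sum_expand : forall w n G, (1 <= n)%nat ->
  comp_merge_sum n w G = sumR n (fun m => coef w n m * comp_sum m w G).
Proof.
  induction w as [|w IHw]; intros n G Hn; destruct n as [|n]; try lia.
  - unfold comp_merge_sum. rewrite comps_small by lia. symmetry. apply sumR_zero. intros m Hm.
    rewrite comp_sum_small by lia. ring.
  - rewrite comp_merge_sum_succ.
    set (G1 := fun p => G (1%nat :: p)). set (Gb := fun p => G (bump_head p)).
    assert (Hhead : match n with O => comp_sum 0 w G1 | _ => comp_merge_sum n w (glue 1 G) end =
        coef (S w) (S n) 1 * comp_sum 0 w G1 +
        sumR n (fun m => coef w n m * (comp_sum m w G1 + t * comp_sum m w Gb))).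
    { destruct n as [|n].
      - rewrite coef_diag. simpl. ring.
      - rewrite IHw by lia. rewrite comp_sum_0.
        replace (coef (S w) (S (S n)) 1 * (if Nat.eqb w 0 then G1 [] else 0)) with 0
          by (unfold coef; destruct w; simpl; ring).
        rewrite Rplus_0_l. apply sumR_ext. intros [|m] Hm; [lia|].
        rewrite comp_sum_glue. reflexivity. }
    rewrite Hhead, (IHw (S n) Gb) by lia.
    rewrite (sumR_ext (S n) (fun m => coef (S w) (S n) m * comp_sum m (S w) G)
      (fun m => coef (S w) (S n) m * comp_sum (m - 1) w G1 + coef (S w) (S n) m * comp_sum m w Gb)).
    2:{ intros [|m] Hm; [lia|]. rewrite comp_sum_succ. simpl Nat.sub.
        rewrite Nat.sub_0_r. unfold G1, Gb. ring. }
    rewrite sumR_plus, (coef_shift_sum w n (fun i => comp_sum i w G1)).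
    rewrite (coef_pascal_sum w n (fun i => comp_sum i w Gb))
      by (intros; apply comp_sum_small; lia).
    rewrite (sumR_ext n _
      (fun m => coef w n m * comp_sum m w G1 + t * (coef w n m * comp_sum m w Gb)))
      by (intros; ring).
    rewrite sumR_plus, sumR_scal. ring.
Qed.

End Merges.

Lemma adm_merge_sum_expand t n k G : (1 <= n)%nat -> (1 <= k)%nat ->
  sum_list (map (merge_sum t G) (adm_comps n k)) =
  sumR n (fun m => coef t (k - 1) n m * sum_list (map G (adm_comps m k))).
Proof.
  intros Hn Hk. destruct n as [|n]; [lia|]. destruct k as [|k]; [lia|].
  rewrite adm_comps_bump, map_map.
  rewrite (sum_list_map_ext _ (merge_sum t (fun p => G (bump_head p))))
    by (intros; apply merge_sum_bump_head).
  change (sum_list (map (merge_sum t (fun p => G (bump_head p))) (comps (S n) k)))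
    with (comp_merge_sum t (S n) k (fun p => G (bump_head p))).
  rewrite comp_merge_sum_expand by lia. simpl Nat.sub. rewrite Nat.sub_0_r.
  apply sumR_ext. intros [|m] Hm; [lia|].
  rewrite adm_comps_bump, map_map. reflexivity.
Qed.

(* The coefficients add up to the polynomial of the theorem, by induction on
   [n] via Pascal's rule in the depth. *)
Section CoefficientSum.
Variable t : R.
Variable K : nat.

Lemma coef_pascal_depth n m : (1 <= m <= n)%nat -> (n <= K)%nat ->
  coef t K (S n) m = coef t K n (m - 1) - t * coef t K n m.
Proof.
  intros Hm Hn. unfold coef.
  replace (S n - m)%nat with (S (n - m)) by lia.
  replace (n - (m - 1))%nat with (S (n - m)) by lia.
  replace (K - (m - 1))%nat with (S (K - m)) by lia.
  rewrite binom_pascal, plus_INR. simpl pow. ring.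
Qed.

Lemma coef_total_succ n : (1 <= n)%nat -> (n <= K)%nat ->
  sumR (S n) (coef t K (S n)) = (1 - t) * sumR n (coef t K n) + t ^ n * INR (binom K n).
Proof.
  intros H1 H2. rewrite sumR_S.
  rewrite (sumR_ext n _ (fun m => coef t K n (m - 1) - t * coef t K n m))
    by (intros; apply coef_pascal_depth; lia).
  rewrite sumR_minus, sumR_scal. destruct n as [|n]; [lia|].
  rewrite sumR_shift. simpl Nat.sub.
  rewrite (sumR_ext n (fun m => coef t K (S n) (m - 0)) (coef t K (S n)))
    by (intros; rewrite Nat.sub_0_r; reflexivity).
  rewrite sumR_S, !coef_diag. unfold coef at 1. rewrite !Nat.sub_0_r. ring.
Qed.

End CoefficientSum.

Lemma binom_C n k : (k <= n)%nat -> INR (binom n k) = C n k.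
Proof.
  assert (HC : forall a b, (b = 0 \/ b = a)%nat -> C a b = 1).
  { intros a b [-> | ->]; unfold C; [rewrite Nat.sub_0_r | rewrite Nat.sub_diag];
      simpl (fact 0); simpl INR; field; apply INR_fact_neq_0. }
  revert k; induction n as [|n IH]; intros k Hk.
  - destruct k; [|lia]. rewrite HC by auto. reflexivity.
  - destruct k as [|k]; [rewrite binom_0, HC by auto; reflexivity|].
    rewrite binom_pascal, plus_INR. destruct (Nat.eq_dec k n) as [->|Hkn].
    + rewrite IH, binom_gt, !HC by lia. simpl. lra.
    + rewrite !IH by lia. apply pascal. lia.
Qed.

Lemma coef_total t K n : (1 <= n)%nat -> (n <= K)%nat ->
  sumR n (coef t K n) = sum_f_R0 (fun j => C K j * t ^ j * (1 - t) ^ (n - 1 - j)) (n - 1).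
Proof.
  intros Hn. induction Hn as [|n Hn IH]; intros HK.
  - simpl. rewrite coef_diag. unfold C. rewrite Nat.sub_0_r. simpl. field.
    apply INR_fact_neq_0.
  - rewrite coef_total_succ, IH by lia.
    replace (S n - 1)%nat with (S (n - 1)) by lia. rewrite tech5.
    replace (S (n - 1)) with n by lia. rewrite binom_C, Nat.sub_diag by lia.
    rewrite (sum_eq (fun j => C K j * t ^ j * (1 - t) ^ (n - j))
                    (fun j => C K j * t ^ j * (1 - t) ^ (n - 1 - j) * (1 - t))).
    + rewrite <- scal_sum. simpl pow. ring.
    + intros j Hj. replace (n - j)%nat with (S (n - 1 - j)) by lia. simpl. ring.
Qed.

Lemma is_series_partial a l : is_series a l <-> is_lim_seq (fun n => sum_f_R0 a n) l.
Proof. rewrite is_series_Reals, is_lim_seq_Reals. unfold infinite_sum, Un_cv. tauto. Qed.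

(* [is_series_ext] specialised to real series, so that the side equations
   are stated in [R]. *)
Lemma is_series_ext_R (a b : nat -> R) (l : R) :
  (forall n, a n = b n) -> is_series a l -> is_series b l.
Proof. apply is_series_ext. Qed.

Lemma is_series_scal_R c (a : nat -> R) (l : R) :
  is_series a l -> is_series (fun n => c * a n) (c * l).
Proof. intros H. exact (is_series_scal_l c a l H). Qed.

Lemma is_series_first c : is_series (fun n => if Nat.eqb n 0 then c else 0) c.
Proof.
  apply is_series_partial. apply is_lim_seq_ext with (fun _ => c); [|apply is_lim_seq_const].
  intros n. induction n as [|n IH]; [simpl; lra|]. rewrite tech5, <- IH. simpl. lra.
Qed.

Lemma is_series_sumR M (F : nat -> nat -> R) (s : nat -> R) :
  (forall m, (1 <= m <= M)%nat -> is_series (F m) (s m)) ->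
  is_series (fun h => sumR M (fun m => F m h)) (sumR M s).
Proof.
  induction M as [|M IH]; intros H; simpl.
  - apply (is_series_ext_R (fun n => if Nat.eqb n 0 then 0 else 0)).
    + intros n. destruct (Nat.eqb n 0); reflexivity.
    + apply is_series_first.
  - apply (is_series_plus _ _ _ _ (IH (fun m Hm => H m ltac:(lia))) (H (S M) ltac:(lia))).
Qed.

Lemma is_series_cauchy_nonneg a b la lb : (forall n, 0 <= a n) -> (forall n, 0 <= b n) ->
  is_series a la -> is_series b lb ->
  is_series (fun n => sum_f_R0 (fun k => a k * b (n - k)%nat) n) (la * lb).
Proof.
  intros Ha Hb Hsa Hsb. apply is_series_mult; auto.
  - exists la. apply (is_series_ext_R a); auto. intros n. rewrite Rabs_pos_eq; auto.
  - exists lb. apply (is_series_ext_R b); auto. intros n. rewrite Rabs_pos_eq; auto.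
Qed.

Lemma partial_le_series a l :
  (forall n, 0 <= a n) -> is_series a l -> forall n, sum_f_R0 a n <= l.
Proof.
  intros Ha Hs n. apply is_series_partial in Hs.
  apply (is_lim_seq_incr_compare _ _ Hs). intros k. simpl. specialize (Ha (S k)). lra.
Qed.

Lemma term_le_series a l : (forall n, 0 <= a n) -> is_series a l -> forall n, a n <= l.
Proof.
  intros Ha Hs n. pose proof (partial_le_series a l Ha Hs n) as Hp.
  destruct n as [|n]; [exact Hp|]. simpl in Hp.
  assert (0 <= sum_f_R0 a n) by (apply cond_pos_sum; auto). lra.
Qed.

Lemma is_lim_seq_sum_f_R0 H (u : nat -> nat -> R) (l : nat -> R) :
  (forall h, is_lim_seq (fun N => u N h) (l h)) ->
  is_lim_seq (fun N => sum_f_R0 (u N) H) (sum_f_R0 l H).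
Proof. induction H; intros Hl; simpl; auto. apply is_lim_seq_plus'; auto. Qed.

Lemma is_lim_seq_sumR N (u : nat -> nat -> R) (l : nat -> R) :
  (forall n, (1 <= n <= N)%nat -> is_lim_seq (u n) (l n)) ->
  is_lim_seq (fun M => sumR N (fun n => u n M)) (sumR N l).
Proof.
  induction N as [|N IH]; intros H; simpl; [apply is_lim_seq_const|].
  apply is_lim_seq_plus'; [apply IH; intros; apply H; lia | apply H; lia].
Qed.

Lemma is_lim_seq_sum_list {A} (l : list A) (f : A -> nat -> R) (g : A -> R) :
  (forall p, In p l -> is_lim_seq (f p) (g p)) ->
  is_lim_seq (fun M => sum_list (map (fun p => f p M) l)) (sum_list (map g l)).
Proof.
  induction l as [|a l IH]; intros H; simpl; [apply is_lim_seq_const|].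
  apply is_lim_seq_plus'; [apply H; left; auto | apply IH; intros; apply H; right; auto].
Qed.

Lemma is_lim_seq_inv_S : is_lim_seq (fun N => / INR (S N)) 0.
Proof.
  apply (is_lim_seq_inv (fun N => INR (S N)) p_infty).
  - apply -> (is_lim_seq_incr_1 INR). apply is_lim_seq_INR.
  - simpl. congruence.
Qed.

Lemma lim_le (u v : nat -> R) (lu lv : R) :
  (forall n, u n <= v n) -> is_lim_seq u lu -> is_lim_seq v lv -> lu <= lv.
Proof. intros H Hu Hv. exact (is_lim_seq_le u v lu lv H Hu Hv). Qed.

Lemma is_series_monotone_limit (a : nat -> nat -> R) (al : nat -> R) (F : nat -> R) (Fl : R) :
  (forall N h, 0 <= a N h) -> (forall N h, a N h <= a (S N) h) ->
  (forall h, is_lim_seq (fun N => a N h) (al h)) ->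
  (forall N, is_series (a N) (F N)) -> is_lim_seq F Fl -> is_series al Fl.
Proof.
  intros Hpos Hinc Hlim Hser HF.
  assert (Hal : forall N h, a N h <= al h)
    by (intros N h; apply (is_lim_seq_incr_compare (fun N => a N h)); auto).
  assert (HFinc : forall N, F N <= F (S N)).
  { intros N. apply (lim_le (fun n => sum_f_R0 (a N) n) (fun n => sum_f_R0 (a (S N)) n));
      [intros n; apply sum_Rle; auto | apply is_series_partial; auto ..]. }
  assert (HFl : forall N, F N <= Fl) by (apply is_lim_seq_incr_compare; auto).
  assert (Hpartial : forall H, sum_f_R0 al H <= Fl).
  { intros H. apply (lim_le (fun N => sum_f_R0 (a N) H) F); auto.
    - intros N. pose proof (partial_le_series (a N) (F N) (Hpos N) (Hser N) H).
      pose proof (HFl N). lra.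
    - apply is_lim_seq_sum_f_R0; auto. }
  destruct (ex_finite_lim_seq_incr (fun H => sum_f_R0 al H) Fl) as [S HS]; auto.
  { intros n. simpl. specialize (Hal O (S n)). specialize (Hpos O (S n)). lra. }
  assert (S <= Fl)
    by (apply (lim_le (fun H => sum_f_R0 al H) (fun _ => Fl)); auto; apply is_lim_seq_const).
  assert (Fl <= S).
  { apply (lim_le F (fun _ => S)); auto; [|apply is_lim_seq_const].
    intros N. apply (lim_le (fun n => sum_f_R0 (a N) n) (fun n => sum_f_R0 al n));
      [intros n; apply sum_Rle; auto | apply is_series_partial; auto | exact HS]. }
  apply is_series_partial. replace Fl with S by lra. exact HS.
Qed.

Lemma CV_radius_pos a r B : 0 < r -> (forall n, Rabs (a n * r ^ n) <= B) ->
  Rbar_lt 0 (CV_radius a).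
Proof.
  intros Hr HB. apply Rbar_lt_le_trans with r; [exact Hr|].
  destruct (CV_radius_bounded a) as [Hub _]. apply Hub. exists B. exact HB.
Qed.

Lemma continuous_zero_right (f : R -> R) r : 0 < r -> continuity_pt f 0 ->
  (forall x, 0 < x <= r -> f x = 0) -> f 0 = 0.
Proof.
  intros Hr Hcont Hzero. set (u := fun N => r * / INR (S N)).
  assert (Hu : is_lim_seq u 0).
  { pose proof (is_lim_seq_mult' _ _ r 0 (is_lim_seq_const r) is_lim_seq_inv_S) as H.
    rewrite Rmult_0_r in H. exact H. }
  assert (Hconst : is_lim_seq (fun _ => 0) (f 0)).
  { apply (is_lim_seq_ext (fun N => f (u N))); [|exact (is_lim_seq_continuous _ _ _ Hcont Hu)].
    intros N. apply Hzero. unfold u. pose proof (pos_INR N). rewrite S_INR.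
    assert (0 < / (INR N + 1) <= 1).
    { split; [apply Rinv_0_lt_compat; lra|]. rewrite <- Rinv_1. apply Rinv_le_contravar; lra. }
    split; nra. }
  apply is_lim_seq_unique in Hconst. rewrite Lim_seq_const in Hconst.
  injection Hconst as Hconst. symmetry. exact Hconst.
Qed.

(* A power series with bounded terms at [r > 0] that vanishes on [(0, r]]
   has only zero coefficients: divide by [x ^ h] and let [x] tend to [0]. *)
Lemma pseries_zero_coefs a r B : 0 < r -> (forall n, Rabs (a n * r ^ n) <= B) ->
  (forall x, 0 < x <= r -> PSeries a x = 0) -> forall h, a h = 0.
Proof.
  intros Hr HB Hzero h. induction h as [h IH] using (well_founded_induction lt_wf).
  set (c := PS_decr_n a h).
  assert (Hc : forall x, 0 < x <= r -> PSeries c x = 0).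
  { intros x Hx. pose proof (PSeries_decr_n_aux a h x IH) as Hd.
    rewrite Hzero in Hd by exact Hx. symmetry in Hd.
    apply Rmult_integral in Hd. destruct Hd as [Hd|Hd]; [|exact Hd].
    pose proof (pow_lt x h ltac:(lra)). lra. }
  assert (Hcont : continuity_pt (PSeries c) 0).
  { apply PSeries_continuity. rewrite Rabs_R0.
    apply (CV_radius_pos c r (B / r ^ h)); [exact Hr|]. intros n.
    assert (0 < r ^ h) by (apply pow_lt; lra).
    unfold c, PS_decr_n. apply Rmult_le_reg_r with (r ^ h); [lra|].
    unfold Rdiv. rewrite Rmult_assoc, Rinv_l, Rmult_1_r by lra.
    rewrite <- (Rabs_pos_eq (r ^ h)) at 1 by lra.
    rewrite <- Rabs_mult, Rmult_assoc, <- pow_add, (Nat.add_comm n h). apply HB. }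
  pose proof (continuous_zero_right _ r Hr Hcont Hc) as H0.
  rewrite PSeries_0 in H0. unfold c, PS_decr_n in H0. rewrite Nat.add_0_r in H0. exact H0.
Qed.

Lemma pseries_coef_unique (a b : nat -> R) r : 0 < r ->
  (forall h, 0 <= a h) -> (forall h, 0 <= b h) ->
  (forall x, 0 < x <= r -> exists s,
     is_series (fun h => a h * x ^ h) s /\ is_series (fun h => b h * x ^ h) s) ->
  forall h, a h = b h.
Proof.
  intros Hr Ha Hb Hsum h. enough (a h - b h = 0) by lra.
  destruct (Hsum r ltac:(lra)) as [sr [HAr HBr]].
  apply (pseries_zero_coefs (fun k => a k - b k) r (sr + sr) Hr).
  - intros n.
    assert (Hpos : forall c : nat -> R, (forall k, 0 <= c k) -> forall k, 0 <= c k * r ^ k)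
      by (intros c Hc k; apply Rmult_le_pos; [apply Hc | apply pow_le; lra]).
    pose proof (term_le_series _ _ (Hpos a Ha) HAr n).
    pose proof (term_le_series _ _ (Hpos b Hb) HBr n).
    pose proof (Hpos a Ha n). pose proof (Hpos b Hb n).
    rewrite Rmult_minus_distr_r. apply Rabs_le. lra.
  - intros x Hx. destruct (Hsum x Hx) as [s [HA HB]].
    pose proof (is_series_minus _ _ _ _ HA HB) as Hdiff.
    unfold PSeries. rewrite <- (Rminus_diag s). apply is_series_unique.
    apply (is_series_ext_R _ _ _ (fun k => eq_sym (Rmult_minus_distr_r (a k) (b k) (x ^ k))) Hdiff).
Qed.

Lemma INR_ge1 m : (1 <= m)%nat -> 1 <= INR m.
Proof. intros H. apply (le_INR 1). exact H. Qed.

(* [1/n^2] is dominated by a telescoping difference, which keeps the sums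
   [sum_n 1/n^(d+1)] bounded. *)
Lemma inv_sq_le_diff n : (1 <= n)%nat -> / INR n * / INR n <= 2 * (/ INR n - / INR (S n)).
Proof.
  intros Hn. pose proof (INR_ge1 n Hn). rewrite S_INR.
  replace (2 * (/ INR n - / (INR n + 1))) with (/ (INR n * ((INR n + 1) / 2))) by (field; lra).
  rewrite <- Rinv_mult. apply Rinv_le_contravar; nra.
Qed.

Lemma sumR_telescope_inv N : sumR N (fun n => / INR n - / INR (S n)) = 1 - / INR (S N).
Proof.
  induction N as [|N IH]; [simpl; rewrite Rinv_1; lra|]. rewrite sumR_S, IH. lra.
Qed.

Section Connector.
Variable x : R.
Hypothesis hx0 : 0 <= x.
Hypothesis hx1 : x <= /2.

(* [wgt m = 1/(m - x)], the generating function of the powers [1/m^(i+1)]. *)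
Definition wgt (m : nat) : R := / (INR m - x).

Fixpoint shifted_fact (k : nat) : R :=
  match k with O => 1 | S k' => shifted_fact k' * (INR (S k') - x) end.

Definition connector (m n : nat) : R := shifted_fact m * shifted_fact n / shifted_fact (m + n).

(* [esum j M] is the sum of [wgt m_1 ... wgt m_j] over
   [M >= m_1 > ... > m_j > 0]. *)
Fixpoint esum (j M : nat) : R :=
  match j with O => 1 | S j' => sumR M (fun m => wgt m * esum j' (m - 1)) end.

(* [nested_sum j f M] is the same sum with the outermost variable [m_1]
   additionally weighted by [f m_1]; for [j = 0] it is [f 0]. *)
Definition nested_sum (j : nat) (f : nat -> R) (M : nat) : R :=
  match j with O => f O | S j' => sumR M (fun m => f m * wgt m * esum j' (m - 1)) end.

Lemma S_sub_x_pos m : 0 < INR (S m) - x.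
Proof. pose proof (INR_ge1 (S m) ltac:(lia)). lra. Qed.

Lemma shifted_fact_pos k : 0 < shifted_fact k.
Proof. induction k; simpl; [lra|]. apply Rmult_lt_0_compat; auto. apply S_sub_x_pos. Qed.

Lemma wgt_pos m : (1 <= m)%nat -> 0 < wgt m.
Proof. intros H. destruct m; [lia|]. apply Rinv_0_lt_compat, S_sub_x_pos. Qed.

Lemma wgt_ge m : (1 <= m)%nat -> / INR m <= wgt m.
Proof. intros H. pose proof (INR_ge1 m H). apply Rinv_le_contravar; lra. Qed.

Lemma wgt_le m : (1 <= m)%nat -> wgt m <= 2 * / INR m.
Proof.
  intros H. pose proof (INR_ge1 m H). unfold wgt.
  replace (2 * / INR m) with (/ (INR m / 2)) by (field; lra).
  apply Rinv_le_contravar; lra.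
Qed.

Lemma connector_pos m n : 0 < connector m n.
Proof.
  pose proof (shifted_fact_pos m). pose proof (shifted_fact_pos n).
  pose proof (shifted_fact_pos (m + n)).
  apply Rdiv_lt_0_compat; [nra | lra].
Qed.

Lemma connector_sym m n : connector m n = connector n m.
Proof. unfold connector, Rdiv. rewrite (Nat.add_comm n m). ring. Qed.

Lemma connector_0_r m : connector m 0 = 1.
Proof.
  unfold connector. rewrite Nat.add_0_r. pose proof (shifted_fact_pos m). simpl. field. lra.
Qed.

Lemma connector_0_l n : connector 0 n = 1.
Proof. rewrite connector_sym. apply connector_0_r. Qed.

Lemma connector_step_l m n :
  INR n * connector (S m) n * wgt (S m) = connector m n - connector (S m) n.
Proof.
  unfold connector, wgt. replace (S m + n)%nat with (S (m + n)) by lia.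
  change (shifted_fact (S ?k)) with (shifted_fact k * (INR (S k) - x)).
  pose proof (S_sub_x_pos m). pose proof (S_sub_x_pos (m + n)).
  pose proof (shifted_fact_pos m). pose proof (shifted_fact_pos n).
  pose proof (shifted_fact_pos (m + n)).
  replace (INR (S (m + n))) with (INR (S m) + INR n) in * by (rewrite !S_INR, plus_INR; ring).
  field. lra.
Qed.

Lemma connector_step_r m n :
  INR m * connector m (S n) * wgt (S n) = connector m n - connector m (S n).
Proof. rewrite (connector_sym m (S n)), (connector_sym m n). apply connector_step_l. Qed.

Lemma connector_decr m n : connector m (S n) <= connector m n.
Proof.
  pose proof (connector_step_r m n). pose proof (pos_INR m).
  pose proof (connector_pos m (S n)). pose proof (wgt_pos (S n) ltac:(lia)).
  assert (0 <= INR m * connector m (S n) * wgt (S n))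
    by (apply Rmult_le_pos; [apply Rmult_le_pos|]; lra).
  lra.
Qed.

Lemma connector_le M n : (1 <= n)%nat -> connector M n <= / INR (S M).
Proof.
  intros H. induction H as [|n _ IH]; [|pose proof (connector_decr M n); lra].
  pose proof (shifted_fact_pos M). pose proof (INR_ge1 (S M) ltac:(lia)).
  pose proof (S_sub_x_pos M). set (y := INR (S M)) in *.
  assert (E : connector M 1 = (1 - x) / (y - x)).
  { unfold connector. replace (M + 1)%nat with (S M) by lia.
    change (shifted_fact 1) with (1 * (INR 1 - x)).
    change (shifted_fact (S M)) with (shifted_fact M * (y - x)).
    rewrite INR_1. field. lra. }
  assert (D : / y - (1 - x) / (y - x) = x * (y - 1) / (y * (y - x))) by (field; lra).
  assert (0 <= x * (y - 1) / (y * (y - x))) by (apply Rdiv_le_0_compat; nra).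
  lra.
Qed.

Lemma esum_nonneg j M : 0 <= esum j M.
Proof.
  revert M; induction j; intros M; simpl; [lra|]. apply sumR_nonneg. intros m Hm.
  pose proof (wgt_pos m ltac:(lia)). specialize (IHj (m - 1)%nat). nra.
Qed.

Lemma esum_mono j M M' : (M <= M')%nat -> esum j M <= esum j M'.
Proof.
  intros H. destruct j; simpl; [lra|]. induction H as [|M' _ IH]; [lra|].
  rewrite sumR_S. pose proof (wgt_pos (S M') ltac:(lia)).
  pose proof (esum_nonneg j (S M' - 1)). nra.
Qed.

Lemma nested_sum_ext j f g M : (1 <= j)%nat ->
  (forall m, (1 <= m)%nat -> f m = g m) -> nested_sum j f M = nested_sum j g M.
Proof.
  intros Hj H. destruct j; [lia|]. simpl.
  apply sumR_ext. intros m Hm. rewrite H by lia. reflexivity.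
Qed.

Lemma nested_sum_ext_all j f g M : (forall m, f m = g m) -> nested_sum j f M = nested_sum j g M.
Proof. intros H. destruct j; simpl; auto. apply sumR_ext. intros m _. rewrite H. reflexivity. Qed.

Lemma nested_sum_lin j a b f g M :
  nested_sum j (fun m => a * f m + b * g m) M = a * nested_sum j f M + b * nested_sum j g M.
Proof.
  destruct j; simpl; auto. rewrite <- !sumR_scal, <- sumR_plus. apply sumR_ext. intros; ring.
Qed.

Lemma nested_sum_scal j a f M : nested_sum j (fun m => a * f m) M = a * nested_sum j f M.
Proof. destruct j; simpl; auto. rewrite <- sumR_scal. apply sumR_ext. intros; ring. Qed.

Lemma nested_sum_one j M : nested_sum j (fun _ => 1) M = esum j M.
Proof. destruct j; simpl; auto. apply sumR_ext. intros; ring. Qed.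

Lemma nested_sum_sumR j N F M :
  nested_sum j (fun m => sumR N (fun n => F n m)) M = sumR N (fun n => nested_sum j (F n) M).
Proof.
  destruct j; simpl; [reflexivity|].
  rewrite <- (sumR_swap M N (fun m n => F n m * wgt m * esum j (m - 1))).
  apply sumR_ext. intros m _.
  rewrite Rmult_assoc, Rmult_comm, <- sumR_scal. apply sumR_ext. intros; ring.
Qed.

Lemma nested_sum_mono j f g M : (forall m, f m <= g m) -> nested_sum j f M <= nested_sum j g M.
Proof.
  intros H. destruct j; simpl; auto. apply sumR_le. intros m Hm.
  pose proof (wgt_pos m ltac:(lia)). pose proof (esum_nonneg j (m - 1)). specialize (H m).
  apply Rmult_le_compat_r; auto. apply Rmult_le_compat_r; lra.
Qed.

Lemma nested_sum_nonneg j f M : (forall m, 0 <= f m) -> 0 <= nested_sum j f M.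
Proof.
  intros H. destruct j; simpl; [apply H|]. apply sumR_nonneg. intros m Hm.
  pose proof (wgt_pos m ltac:(lia)). pose proof (esum_nonneg j (m - 1)). specialize (H m).
  apply Rmult_le_pos; [apply Rmult_le_pos|]; lra.
Qed.

Lemma sumR_triangle M (h u : nat -> R) :
  sumR M (fun m => h m * sumR (m - 1) u) = sumR M (fun m' => u m' * (sumR M h - sumR m' h)).
Proof.
  induction M as [|M IH]; simpl; auto.
  rewrite IH, Nat.sub_0_r.
  rewrite (sumR_ext M (fun m' => u m' * (sumR M h + h (S M) - sumR m' h))
     (fun m' => u m' * (sumR M h - sumR m' h) + h (S M) * u m')) by (intros; ring).
  rewrite sumR_plus, sumR_scal. ring.
Qed.

Lemma nested_sum_peel j f M :
  nested_sum (S j) f M =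
  nested_sum j (fun a => sumR M (fun m => f m * wgt m) - sumR a (fun m => f m * wgt m)) M.
Proof.
  destruct j as [|j]; simpl.
  - rewrite Rminus_0_r. apply sumR_ext. intros; ring.
  - rewrite (sumR_triangle M (fun m => f m * wgt m) (fun m0 => wgt m0 * esum j (m0 - 1))).
    apply sumR_ext. intros; ring.
Qed.

Lemma telescope_l n a : (1 <= n)%nat ->
  sumR a (fun m => connector m n * wgt m) = (1 - connector a n) / INR n.
Proof.
  intros Hn. pose proof (INR_ge1 n Hn). induction a as [|a IH].
  - simpl. rewrite connector_0_l. field. lra.
  - rewrite sumR_S, IH. pose proof (connector_step_l a n). field_simplify_eq; [|lra].
    lra.
Qed.

Lemma telescope_r m N : (1 <= m)%nat ->
  sumR N (fun n => connector m n * wgt n) = (1 - connector m N) / INR m.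
Proof.
  intros Hm. pose proof (INR_ge1 m Hm). induction N as [|N IH].
  - simpl. rewrite connector_0_r. field. lra.
  - rewrite sumR_S, IH. pose proof (connector_step_r m N). field_simplify_eq; [|lra].
    lra.
Qed.

(* [conn_sum j M n]: the nested sum of depth [j] with the connector
   [C(m_1, n)]; it interpolates between [esum j M] ([n = 0]) and [1/n^j]
   ([M -> oo]). *)
Definition conn_sum (j M n : nat) : R := nested_sum j (fun m => connector m n) M.

Lemma conn_sum_0 M n : conn_sum 0 M n = 1.
Proof. apply connector_0_l. Qed.

Lemma conn_sum_succ j M n : (1 <= n)%nat ->
  conn_sum (S j) M n = (conn_sum j M n - connector M n * esum j M) / INR n.
Proof.
  intros Hn. pose proof (INR_ge1 n Hn). unfold conn_sum. rewrite nested_sum_peel.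
  rewrite (nested_sum_ext_all j _
    (fun a => / INR n * connector a n + (- (connector M n / INR n)) * 1)).
  - rewrite nested_sum_lin, nested_sum_one. field. lra.
  - intros a. rewrite !telescope_l by auto. field. lra.
Qed.

Lemma conn_sum_le j M n : (1 <= n)%nat -> conn_sum j M n <= / INR n ^ j.
Proof.
  intros Hn. pose proof (INR_ge1 n Hn). induction j as [|j IH].
  - rewrite conn_sum_0. simpl. lra.
  - rewrite conn_sum_succ by auto. pose proof (connector_pos M n). pose proof (esum_nonneg j M).
    assert (0 < / INR n) by (apply Rinv_0_lt_compat; lra).
    simpl pow. rewrite Rinv_mult. unfold Rdiv. rewrite (Rmult_comm (/ INR n)).
    apply Rmult_le_compat_r; nra.
Qed.

Fixpoint esum_total (j M : nat) : R :=
  match j with O => 0 | S j' => esum_total j' M + esum j' M end.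

Lemma conn_sum_error j M n : (1 <= n)%nat ->
  / INR n ^ j - conn_sum j M n <= connector M n * esum_total j M.
Proof.
  intros Hn. pose proof (INR_ge1 n Hn). induction j as [|j IH].
  - rewrite conn_sum_0. simpl. lra.
  - rewrite conn_sum_succ by auto. simpl esum_total. pose proof (conn_sum_le j M n Hn).
    pose proof (connector_pos M n). pose proof (esum_nonneg j M).
    assert (0 < / INR n <= 1).
    { split; [apply Rinv_0_lt_compat; lra|]. rewrite <- Rinv_1. apply Rinv_le_contravar; lra. }
    replace (/ INR n ^ S j - (conn_sum j M n - connector M n * esum j M) / INR n)
      with (/ INR n * ((/ INR n ^ j - conn_sum j M n) + connector M n * esum j M))
      by (simpl; rewrite Rinv_mult; unfold Rdiv; ring).
    assert (0 <= connector M n * esum j M) by (apply Rmult_le_pos; lra).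
    nra.
Qed.

Definition lhs_gen (j M : nat) : R := nested_sum j (fun m => / INR m) M.

Definition rhs_gen (d N : nat) : R := sumR N (fun n => wgt n * / INR n ^ d).

(* Inserting [1/m = sum_{n <= N} wgt n C(m, n) + C(m, N)/m] into [lhs_gen]. *)
Lemma lhs_gen_decomp j M N : (1 <= j)%nat ->
  lhs_gen j M = sumR N (fun n => wgt n * conn_sum j M n)
                + nested_sum j (fun m => connector m N / INR m) M.
Proof.
  intros Hj. unfold lhs_gen, conn_sum.
  rewrite (nested_sum_ext j _
    (fun m => 1 * sumR N (fun n => wgt n * connector m n) + 1 * (connector m N / INR m)));
    auto.
  - rewrite nested_sum_lin, nested_sum_sumR.
    rewrite (sumR_ext N (fun n => nested_sum j (fun m => wgt n * connector m n) M)
               (fun n => wgt n * nested_sum j (fun m => connector m n) M))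
      by (intros; apply nested_sum_scal).
    ring.
  - intros m Hm. pose proof (INR_ge1 m Hm).
    rewrite (sumR_ext N _ (fun n => connector m n * wgt n)) by (intros; ring).
    rewrite telescope_r by auto. field. lra.
Qed.

Lemma rhs_gen_le d N : (1 <= d)%nat -> rhs_gen d N <= 4.
Proof.
  intros Hd. unfold rhs_gen.
  apply Rle_trans with (sumR N (fun n => 4 * (/ INR n - / INR (S n)))).
  - apply sumR_le. intros n Hn. pose proof (INR_ge1 n ltac:(lia)).
    pose proof (wgt_le n ltac:(lia)). pose proof (wgt_pos n ltac:(lia)).
    assert (/ INR n ^ d <= / INR n).
    { apply Rinv_le_contravar; [lra|].
      rewrite <- (pow_1 (INR n)) at 1. apply Rle_pow; [lra | lia]. }
    assert (0 <= / INR n ^ d) by (left; apply Rinv_0_lt_compat, pow_lt; lra).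
    pose proof (inv_sq_le_diff n ltac:(lia)).
    apply Rle_trans with (2 * / INR n * / INR n); [apply Rmult_le_compat|]; lra.
  - rewrite sumR_scal, sumR_telescope_inv. pose proof (RinvN_pos N). rewrite S_INR. lra.
Qed.

Lemma rhs_gen_mono d N : rhs_gen d N <= rhs_gen d (S N).
Proof.
  unfold rhs_gen. rewrite sumR_S. pose proof (wgt_pos (S N) ltac:(lia)).
  pose proof (INR_ge1 (S N) ltac:(lia)).
  assert (0 < / INR (S N) ^ d) by (apply Rinv_0_lt_compat, pow_lt; lra). nra.
Qed.

Lemma lhs_gen_mono j M : (1 <= j)%nat -> lhs_gen j M <= lhs_gen j (S M).
Proof.
  intros Hj. destruct j; [lia|]. unfold lhs_gen, nested_sum. rewrite sumR_S.
  pose proof (wgt_pos (S M) ltac:(lia)). pose proof (INR_ge1 (S M) ltac:(lia)).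
  pose proof (esum_nonneg j (S M - 1)).
  assert (0 < / INR (S M)) by (apply Rinv_0_lt_compat; lra).
  assert (0 <= / INR (S M) * wgt (S M) * esum j (S M - 1))
    by (apply Rmult_le_pos; [apply Rmult_le_pos|]; lra).
  lra.
Qed.

Lemma remainder_nonneg j M N : 0 <= nested_sum j (fun m => connector m N / INR m) M.
Proof.
  apply nested_sum_nonneg. intros [|m]; [simpl; unfold Rdiv; rewrite Rinv_0; lra|].
  pose proof (connector_pos (S m) N). pose proof (INR_ge1 (S m) ltac:(lia)).
  apply Rdiv_le_0_compat; lra.
Qed.

Lemma remainder_le j M N : (1 <= N)%nat ->
  nested_sum j (fun m => connector m N / INR m) M <= / INR (S N) * lhs_gen j M.
Proof.
  intros HN. unfold lhs_gen. rewrite <- nested_sum_scal.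
  apply nested_sum_mono. intros [|m]; [simpl; unfold Rdiv; rewrite Rinv_0; lra|].
  rewrite connector_sym. pose proof (connector_le N (S m) ltac:(lia)).
  pose proof (INR_ge1 (S m) ltac:(lia)).
  assert (0 < / INR (S m)) by (apply Rinv_0_lt_compat; lra).
  unfold Rdiv. apply Rmult_le_compat_r; lra.
Qed.

Lemma lhs_gen_upper j M N : (1 <= j)%nat -> (1 <= N)%nat ->
  (1 - / INR (S N)) * lhs_gen j M <= rhs_gen j N.
Proof.
  intros Hj HN. pose proof (lhs_gen_decomp j M N Hj). pose proof (remainder_le j M N HN).
  assert (sumR N (fun n => wgt n * conn_sum j M n) <= rhs_gen j N).
  { apply sumR_le. intros n Hn. pose proof (wgt_pos n ltac:(lia)).
    pose proof (conn_sum_le j M n ltac:(lia)). apply Rmult_le_compat_l; lra. }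
  lra.
Qed.

Lemma lhs_gen_le j M : (1 <= j)%nat -> lhs_gen j M <= 8.
Proof.
  intros Hj. pose proof (lhs_gen_upper j M 1 Hj ltac:(lia)). pose proof (rhs_gen_le j 1 Hj).
  replace (/ INR 2) with (/ 2) in H by (simpl; f_equal; ring). lra.
Qed.

Lemma lhs_gen_cv j : (1 <= j)%nat -> exists L : R, is_lim_seq (lhs_gen j) L.
Proof.
  intros Hj. apply (ex_finite_lim_seq_incr _ 8).
  - intros; apply lhs_gen_mono; auto.
  - intros; apply lhs_gen_le; auto.
Qed.

Lemma rhs_gen_cv d : (1 <= d)%nat -> exists Z : R, is_lim_seq (rhs_gen d) Z.
Proof.
  intros Hd. apply (ex_finite_lim_seq_incr _ 4).
  - apply rhs_gen_mono.
  - intros; apply rhs_gen_le; auto.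
Qed.

Lemma esum_tail_bound i M : (1 <= M)%nat ->
  esum i M * / INR M <= 4 * (lhs_gen (S i) (M + M) - lhs_gen (S i) M).
Proof.
  intros HM. pose proof (INR_ge1 M HM). unfold lhs_gen, nested_sum. rewrite sumR_add.
  assert (Hs : sumR M (fun k => esum i M * / (4 * INR M * INR M)) <=
               sumR M (fun k => / INR (M + k) * wgt (M + k) * esum i (M + k - 1))).
  { apply sumR_le. intros k Hk. pose proof (INR_ge1 k ltac:(lia)).
    assert (INR k <= INR M) by (apply le_INR; lia).
    assert (HMk : INR M + 1 <= INR (M + k) <= 2 * INR M) by (rewrite plus_INR; split; lra).
    pose proof (wgt_ge (M + k) ltac:(lia)). pose proof (esum_mono i M (M + k - 1) ltac:(lia)).
    pose proof (esum_nonneg i M).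
    assert (/ (2 * INR M) <= / INR (M + k)) by (apply Rinv_le_contravar; lra).
    assert (0 < / (2 * INR M)) by (apply Rinv_0_lt_compat; lra).
    replace (/ (4 * INR M * INR M)) with (/ (2 * INR M) * / (2 * INR M)) by (field; lra).
    apply Rle_trans with (/ INR (M + k) * wgt (M + k) * esum i M).
    - rewrite (Rmult_comm (esum i M)). apply Rmult_le_compat_r; auto. apply Rmult_le_compat; lra.
    - apply Rmult_le_compat_l; auto. apply Rmult_le_pos; lra. }
  rewrite sumR_const in Hs.
  replace (INR M * (esum i M * / (4 * INR M * INR M))) with (esum i M * / INR M / 4) in Hs
    by (field; lra).
  lra.
Qed.

(* Hence [C(M, n) esum i M -> 0] as [M -> oo], since [C(M, n) <= 1/(M+1)]
   and [lhs_gen (i + 1)] converges. *)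
Lemma connector_esum_lim i n : (1 <= n)%nat ->
  is_lim_seq (fun M => connector M n * esum i M) 0.
Proof.
  intros Hn. destruct (lhs_gen_cv (S i) ltac:(lia)) as [L HL].
  apply is_lim_seq_incr_1.
  apply is_lim_seq_le_le with (u := fun _ => 0) (w := fun M => 4 * (L - lhs_gen (S i) (S M))).
  - intros M. pose proof (connector_pos (S M) n). pose proof (esum_nonneg i (S M)). split.
    + apply Rmult_le_pos; lra.
    + pose proof (connector_le (S M) n Hn). pose proof (esum_tail_bound i (S M) ltac:(lia)).
      pose proof (is_lim_seq_incr_compare _ _ HL (fun k => lhs_gen_mono (S i) k ltac:(lia))
                    (S M + S M)).
      assert (/ INR (S (S M)) <= / INR (S M)).
      { apply Rinv_le_contravar; [pose proof (INR_ge1 (S M) ltac:(lia)); lra | apply le_INR; lia]. }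
      apply Rle_trans with (esum i (S M) * / INR (S M)); [|lra].
      rewrite Rmult_comm. apply Rmult_le_compat_l; lra.
  - apply is_lim_seq_const.
  - replace (Finite 0) with (Finite (4 * (L - L))) by (f_equal; ring).
    apply (is_lim_seq_mult' _ _ 4 (L - L)); [apply is_lim_seq_const|].
    apply is_lim_seq_minus'; [apply is_lim_seq_const|].
    apply -> (is_lim_seq_incr_1 (lhs_gen (S i))). exact HL.
Qed.

Lemma conn_sum_lim j n : (1 <= n)%nat -> is_lim_seq (fun M => conn_sum j M n) (/ INR n ^ j).
Proof.
  intros Hn.
  assert (Herr : is_lim_seq (fun M => connector M n * esum_total j M) 0).
  { induction j as [|j IH]; simpl.
    - apply (is_lim_seq_ext (fun _ => 0)); [intros; ring | apply is_lim_seq_const].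
    - replace (Finite 0) with (Finite (0 + 0)) by (f_equal; ring).
      apply (is_lim_seq_ext (fun M => connector M n * esum_total j M + connector M n * esum j M));
        [intros; ring|].
      apply is_lim_seq_plus'; auto. apply connector_esum_lim; auto. }
  apply is_lim_seq_le_le with (u := fun M => / INR n ^ j - connector M n * esum_total j M)
                              (w := fun _ => / INR n ^ j).
  - intros M. pose proof (conn_sum_error j M n Hn). pose proof (conn_sum_le j M n Hn). lra.
  - pose proof (is_lim_seq_minus' _ _ _ _ (is_lim_seq_const (/ INR n ^ j)) Herr) as Hm.
    rewrite Rminus_0_r in Hm. exact Hm.
  - apply is_lim_seq_const.
Qed.

Lemma lhs_rhs_gen_lim d (L Z : R) : (1 <= d)%nat ->
  is_lim_seq (lhs_gen d) L -> is_lim_seq (rhs_gen d) Z -> L = Z.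
Proof.
  intros Hd HL HZ. apply Rle_antisym.
  - assert (Hfrac : forall N, (1 - / INR (S (S N))) * L <= Z).
    { intros N. pose proof (is_lim_seq_incr_compare _ _ HZ (rhs_gen_mono d) (S N)).
      assert ((1 - / INR (S (S N))) * L <= rhs_gen d (S N)); [|lra].
      apply (lim_le (fun M => (1 - / INR (S (S N))) * lhs_gen d M) (fun _ => rhs_gen d (S N))).
      - intros M. apply lhs_gen_upper; auto; lia.
      - apply (is_lim_seq_mult' _ _ _ L (is_lim_seq_const _) HL).
      - apply is_lim_seq_const. }
    apply (lim_le (fun N => (1 - / INR (S (S N))) * L) (fun _ => Z)); auto;
      [|apply is_lim_seq_const].
    assert (Hinv : is_lim_seq (fun N => / INR (S (S N))) 0)
      by (apply -> (is_lim_seq_incr_1 (fun N => / INR (S N))); exact is_lim_seq_inv_S).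
    pose proof (is_lim_seq_mult' _ _ _ L
                  (is_lim_seq_minus' _ _ 1 0 (is_lim_seq_const 1) Hinv) (is_lim_seq_const L)) as H.
    rewrite Rminus_0_r, Rmult_1_l in H. exact H.
  - apply (lim_le (rhs_gen d) (fun _ => L)); auto; [|apply is_lim_seq_const].
    intros N. apply (lim_le (fun M => sumR N (fun n => wgt n * conn_sum d M n)) (lhs_gen d)); auto.
    + intros M. pose proof (lhs_gen_decomp d M N Hd). pose proof (remainder_nonneg d M N).
      lra.
    + unfold rhs_gen. apply is_lim_seq_sumR. intros n Hn.
      apply (is_lim_seq_mult' _ _ (wgt n) (/ INR n ^ d) (is_lim_seq_const _)).
      apply conn_sum_lim; lia.
Qed.

End Connector.

Lemma mzv_trunc_nonneg ks M : 0 <= mzv_trunc ks M.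
Proof.
  revert M; induction ks as [|k ks IH]; intros M; simpl; [lra|].
  apply sumR_nonneg. intros m Hm. apply Rmult_le_pos; auto.
  left. apply Rinv_0_lt_compat, pow_lt. pose proof (INR_ge1 m ltac:(lia)). lra.
Qed.

Lemma mzv_trunc_mono ks M : mzv_trunc ks M <= mzv_trunc ks (S M).
Proof.
  destruct ks as [|k ks]; [simpl; lra|].
  change (mzv_trunc (k :: ks) ?N) with (sumR N (fun m => / INR m ^ k * mzv_trunc ks (m - 1))).
  rewrite sumR_S.
  assert (0 <= / INR (S M) ^ k * mzv_trunc ks (S M - 1)); [|lra].
  apply Rmult_le_pos; [|apply mzv_trunc_nonneg].
  left. apply Rinv_0_lt_compat, pow_lt. pose proof (INR_ge1 (S M) ltac:(lia)). lra.
Qed.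

Lemma mzv_of_lim ks (l : R) : is_lim_seq (mzv_trunc ks) l -> mzv ks = l.
Proof.
  intros Hl. apply is_lim_seq_Reals in Hl. unfold mzv, lim_or0.
  destruct (excluded_middle_informative _) as [H|H].
  - destruct (constructive_indefinite_description _ H) as [l' Hl']. simpl.
    apply UL_sequence with (mzv_trunc ks); auto.
  - exfalso. apply H. exists l. exact Hl.
Qed.

Lemma mzv_conv ks B : (forall M, mzv_trunc ks M <= B) -> is_lim_seq (mzv_trunc ks) (mzv ks).
Proof.
  intros HB. destruct (ex_finite_lim_seq_incr (mzv_trunc ks) B) as [l Hl];
    [apply mzv_trunc_mono | exact HB |].
  rewrite (mzv_of_lim ks l Hl). exact Hl.
Qed.

(* Coefficient of [x^h] in [esum x j M]: truncated MZVs of all depth-[j]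
   indices of weight [j + h]. *)
Definition esum_coef (j h M : nat) : R := comp_sum j (j + h) (fun p => mzv_trunc p M).

(* Coefficient of [x^h] in [lhs_gen x d M]: truncated MZVs of all admissible
   depth-[d] indices of weight [d + 1 + h]. *)
Definition adm_coef (d h M : nat) : R :=
  comp_sum d (d + h) (fun p => mzv_trunc (bump_head p) M).

Lemma esum_coef_nonneg j h M : 0 <= esum_coef j h M.
Proof. apply comp_sum_nonneg. intros; apply mzv_trunc_nonneg. Qed.

Lemma coef_first_entry j h M s :
  comp_sum (S j) (S j + h)
    (fun p => match p with
              | [] => 0
              | a :: p' => sumR M (fun m => / INR m ^ (a + s) * mzv_trunc p' (m - 1))
              end)
  = sumR M (fun m => sumR (S h) (fun a => / INR m ^ (a + s) * esum_coef j (h + 1 - a) (m - 1))).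
Proof.
  rewrite comp_sum_cons.
  rewrite (sumR_ext _ _ (fun a => sumR M (fun m =>
             / INR m ^ (a + s) * comp_sum j (S j + h - a) (fun p => mzv_trunc p (m - 1))))).
  2:{ intros a _.
      rewrite (comp_sum_sumR j _ M (fun m p => / INR m ^ (a + s) * mzv_trunc p (m - 1))).
      apply sumR_ext. intros m _. apply comp_sum_scal. }
  rewrite sumR_swap. apply sumR_ext. intros m _.
  replace (S j + h)%nat with (S h + j)%nat by lia. rewrite sumR_add.
  rewrite (sumR_zero j (fun i => / INR m ^ (S h + i + s) *
             comp_sum j (S h + j - (S h + i)) (fun p => mzv_trunc p (m - 1))))
    by (intros i Hi; rewrite comp_sum_small by lia; ring).
  rewrite Rplus_0_r. apply sumR_ext. intros a Ha. unfold esum_coef.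
  replace (S h + j - a)%nat with (j + (h + 1 - a))%nat by lia. reflexivity.
Qed.

Section GeneratingSeries.
Variable x : R.
Hypothesis hx0 : 0 <= x.
Hypothesis hx1 : x <= /2.

Lemma wgt_series m : (1 <= m)%nat -> is_series (fun i => x ^ i * / INR m ^ (S i)) (wgt x m).
Proof.
  intros Hm. pose proof (INR_ge1 m Hm).
  assert (Hq : Rabs (x * / INR m) < 1).
  { rewrite Rabs_pos_eq by (apply Rmult_le_pos; [lra | left; apply Rinv_0_lt_compat; lra]).
    apply Rmult_lt_reg_r with (INR m); [lra|]. rewrite Rmult_assoc, Rinv_l by lra. lra. }
  pose proof (is_series_scal_R (/ INR m) _ _ (is_series_geom _ Hq)) as Hs.
  replace (wgt x m) with (/ INR m * / (1 - x * / INR m)) by (unfold wgt; field; lra).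
  eapply is_series_ext_R; [|exact Hs]. intros i. simpl.
  rewrite Rpow_mult_distr, pow_inv, Rinv_mult. ring.
Qed.

Lemma wgt_times_series m (c : nat -> R) (l : R) : (1 <= m)%nat -> (forall h, 0 <= c h) ->
  is_series (fun h => c h * x ^ h) l ->
  is_series
    (fun h => sum_f_R0 (fun k => x ^ k * / INR m ^ (S k) * (c (h - k)%nat * x ^ (h - k))) h)
    (wgt x m * l).
Proof.
  intros Hm Hc Hl. pose proof (INR_ge1 m Hm).
  apply (is_series_cauchy_nonneg (fun k => x ^ k * / INR m ^ (S k)) (fun n => c n * x ^ n));
    auto using wgt_series.
  - intros n. apply Rmult_le_pos; [apply pow_le; lra|].
    left. apply Rinv_0_lt_compat, pow_lt. lra.
  - intros n. apply Rmult_le_pos; [apply Hc | apply pow_le; lra].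
Qed.

Lemma esum_series j : forall M, is_series (fun h => esum_coef j h M * x ^ h) (esum x j M).
Proof.
  induction j as [|j IH]; intros M.
  - apply (is_series_ext_R (fun n => if Nat.eqb n 0 then 1 else 0)); [|apply is_series_first].
    intros h. unfold esum_coef. rewrite comp_sum_0. destruct h; simpl; ring.
  - simpl esum.
    eapply is_series_ext_R; [|apply (is_series_sumR M (fun m h => sum_f_R0 (fun k =>
        x ^ k * / INR m ^ (S k) * (esum_coef j (h - k) (m - 1) * x ^ (h - k))) h))].
    2:{ intros m Hm. apply (wgt_times_series m (fun n => esum_coef j n (m - 1)));
          auto using esum_coef_nonneg. lia. }
    intros h. unfold esum_coef at 2.
    rewrite (comp_sum_ext (S j) (S j + h) _ (fun p => match p with [] => 0
      | a :: p' => sumR M (fun m => / INR m ^ (a + 0) * mzv_trunc p' (m - 1)) end)).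
    2:{ intros [|a p'] Hp; [apply comps_head in Hp; destruct Hp as [? [? [? _]]]; discriminate|].
        simpl mzv_trunc. apply sumR_ext. intros; rewrite Nat.add_0_r; reflexivity. }
    rewrite coef_first_entry, Rmult_comm, <- sumR_scal. apply sumR_ext. intros m _.
    rewrite sum_f_R0_sumR, <- sumR_scal. apply sumR_ext. intros a Ha.
    replace (h - (a - 1))%nat with (h + 1 - a)%nat by lia.
    replace (S (a - 1)) with (a + 0)%nat by lia.
    replace (x ^ h) with (x ^ (a - 1) * x ^ (h + 1 - a)) by (rewrite <- pow_add; f_equal; lia).
    ring.
Qed.

Lemma lhs_gen_series d M : (1 <= d)%nat ->
  is_series (fun h => adm_coef d h M * x ^ h) (lhs_gen x d M).
Proof.
  intros Hd. destruct d as [|d]; [lia|]. unfold lhs_gen, nested_sum.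
  rewrite (sumR_ext M _ (fun m => / INR m * (wgt x m * esum x d (m - 1)))) by (intros; ring).
  eapply is_series_ext_R; [|apply (is_series_sumR M (fun m h => / INR m * sum_f_R0 (fun k =>
      x ^ k * / INR m ^ (S k) * (esum_coef d (h - k) (m - 1) * x ^ (h - k))) h))].
  2:{ intros m Hm. apply is_series_scal_R, (wgt_times_series m (fun n => esum_coef d n (m - 1)));
        auto using esum_coef_nonneg, esum_series. lia. }
  intros h. unfold adm_coef.
  rewrite (comp_sum_ext (S d) (S d + h) _ (fun p => match p with [] => 0
    | a :: p' => sumR M (fun m => / INR m ^ (a + 1) * mzv_trunc p' (m - 1)) end)).
  2:{ intros [|a p'] Hp; [apply comps_head in Hp; destruct Hp as [? [? [? _]]]; discriminate|].
      simpl bump_head. simpl mzv_trunc. apply sumR_ext. intros; rewrite Nat.add_1_r; reflexivity. }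
  rewrite coef_first_entry, Rmult_comm, <- sumR_scal. apply sumR_ext. intros m _.
  rewrite sum_f_R0_sumR, <- !sumR_scal. apply sumR_ext. intros a Ha.
  replace (h - (a - 1))%nat with (h + 1 - a)%nat by lia.
  replace (a + 1)%nat with (S (S (a - 1))) by lia.
  replace (x ^ h) with (x ^ (a - 1) * x ^ (h + 1 - a)) by (rewrite <- pow_add; f_equal; lia).
  change (INR m ^ S (S (a - 1))) with (INR m * INR m ^ S (a - 1)). rewrite Rinv_mult. ring.
Qed.

Lemma rhs_gen_series d M :
  is_series (fun h => mzv_trunc [(d + 1 + h)%nat] M * x ^ h) (rhs_gen x d M).
Proof.
  unfold rhs_gen. rewrite (sumR_ext M _ (fun n => / INR n ^ d * wgt x n)) by (intros; ring).
  eapply is_series_ext_R;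
    [|apply (is_series_sumR M (fun n h => / INR n ^ d * (x ^ h * / INR n ^ (S h))))].
  2:{ intros n Hn. apply is_series_scal_R, wgt_series. lia. }
  intros h. simpl mzv_trunc. rewrite Rmult_comm, <- sumR_scal. apply sumR_ext. intros n _.
  replace (d + 1 + h)%nat with (d + S h)%nat by lia. rewrite pow_add, Rinv_mult. ring.
Qed.

End GeneratingSeries.

(* The sum formula in a fixed depth [d + 1], as an identity of power series
   in [x] over [(0, 1/2]]. *)
Section SumFormula.
Variable d : nat.
Hypothesis hd : (1 <= d)%nat.

Definition sum_adm (h : nat) : R :=
  sum_list (map (fun p => mzv (bump_head p)) (comps d (d + h))).
Definition zeta_single (h : nat) : R := mzv [(d + 1 + h)%nat].

Lemma adm_coef_mono h M : adm_coef d h M <= adm_coef d h (S M).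
Proof. apply sum_list_map_le. intros; apply mzv_trunc_mono. Qed.

Lemma adm_coef_nonneg h M : 0 <= adm_coef d h M.
Proof. apply comp_sum_nonneg. intros; apply mzv_trunc_nonneg. Qed.

(* All the MZVs involved converge: at [x = 1/2] their truncations are
   dominated by the bounded generating functions. *)
Lemma adm_mzv_conv h p :
  In p (comps d (d + h)) -> is_lim_seq (mzv_trunc (bump_head p)) (mzv (bump_head p)).
Proof.
  intros Hp. apply (mzv_conv _ (8 / (/2) ^ h)). intros M.
  pose proof (pow_lt (/2) h ltac:(lra)).
  pose proof (term_le_series _ _
    (fun n => Rmult_le_pos _ _ (adm_coef_nonneg n M) (pow_le (/2) n ltac:(lra)))
    (lhs_gen_series (/2) ltac:(lra) ltac:(lra) d M hd) h).
  pose proof (lhs_gen_le (/2) ltac:(lra) ltac:(lra) d M hd).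
  assert (mzv_trunc (bump_head p) M <= adm_coef d h M).
  { apply (sum_list_map_single_le (fun p => mzv_trunc (bump_head p) M)); auto.
    intros; apply mzv_trunc_nonneg. }
  apply Rmult_le_reg_r with ((/2) ^ h); auto.
  unfold Rdiv. rewrite Rmult_assoc, Rinv_l by lra. nra.
Qed.

Lemma zeta_single_conv h : is_lim_seq (mzv_trunc [(d + 1 + h)%nat]) (zeta_single h).
Proof.
  apply (mzv_conv _ (4 / (/2) ^ h)). intros M.
  pose proof (pow_lt (/2) h ltac:(lra)).
  pose proof (term_le_series _ _
    (fun n => Rmult_le_pos _ _ (mzv_trunc_nonneg _ M) (pow_le (/2) n ltac:(lra)))
    (rhs_gen_series (/2) ltac:(lra) ltac:(lra) d M) h).
  pose proof (rhs_gen_le (/2) ltac:(lra) d M hd).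
  apply Rmult_le_reg_r with ((/2) ^ h); auto.
  unfold Rdiv. rewrite Rmult_assoc, Rinv_l by lra. lra.
Qed.

Lemma adm_coef_lim h : is_lim_seq (fun M => adm_coef d h M) (sum_adm h).
Proof.
  apply (is_lim_seq_sum_list _ (fun p M => mzv_trunc (bump_head p) M)). apply adm_mzv_conv.
Qed.

Lemma sum_adm_nonneg h : 0 <= sum_adm h.
Proof.
  pose proof (is_lim_seq_incr_compare _ _ (adm_coef_lim h) (adm_coef_mono h) 0).
  pose proof (adm_coef_nonneg h 0). lra.
Qed.

Lemma zeta_single_nonneg h : 0 <= zeta_single h.
Proof.
  pose proof (is_lim_seq_incr_compare _ _ (zeta_single_conv h) (fun M => mzv_trunc_mono _ M) 0).
  pose proof (mzv_trunc_nonneg [(d + 1 + h)%nat] 0). lra.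
Qed.

(* Letting [M -> oo] in the generating series (monotone convergence) and
   using the connector identity. *)
Lemma sum_adm_zeta_series x : 0 < x <= /2 -> exists s,
  is_series (fun h => sum_adm h * x ^ h) s /\ is_series (fun h => zeta_single h * x ^ h) s.
Proof.
  intros Hx. destruct (lhs_gen_cv x ltac:(lra) ltac:(lra) d hd) as [L HL].
  destruct (rhs_gen_cv x ltac:(lra) d hd) as [Z HZ].
  pose proof (lhs_rhs_gen_lim x ltac:(lra) ltac:(lra) d L Z hd HL HZ) as HLZ.
  exists Z. split.
  - rewrite <- HLZ.
    apply (is_series_monotone_limit (fun N h => adm_coef d h N * x ^ h) _ (lhs_gen x d)); auto.
    + intros N h. apply Rmult_le_pos; [apply adm_coef_nonneg | apply pow_le; lra].
    + intros N h. apply Rmult_le_compat_r; [apply pow_le; lra | apply adm_coef_mono].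
    + intros h. apply is_lim_seq_mult'; [apply adm_coef_lim | apply is_lim_seq_const].
    + intros N. apply lhs_gen_series; auto; lra.
  - apply (is_series_monotone_limit (fun N h => mzv_trunc [(d + 1 + h)%nat] N * x ^ h)
             _ (rhs_gen x d)); auto.
    + intros N h. apply Rmult_le_pos; [apply mzv_trunc_nonneg | apply pow_le; lra].
    + intros N h. apply Rmult_le_compat_r; [apply pow_le; lra | apply mzv_trunc_mono].
    + intros h. apply is_lim_seq_mult'; [apply zeta_single_conv | apply is_lim_seq_const].
    + intros N. apply rhs_gen_series; lra.
Qed.

Lemma sum_adm_zeta h : sum_adm h = zeta_single h.
Proof.
  apply (pseries_coef_unique sum_adm zeta_single (/2)); try lra.
  - apply sum_adm_nonneg.
  - apply zeta_single_nonneg.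
  - apply sum_adm_zeta_series.
Qed.

End SumFormula.

Theorem sum_formula m k : (1 <= m)%nat -> (m < k)%nat ->
  sum_list (map mzv (adm_comps m k)) = mzv [k].
Proof.
  intros Hm Hk. pose proof (sum_adm_zeta m Hm (k - m - 1)) as H.
  unfold sum_adm, zeta_single in H.
  replace (m + 1 + (k - m - 1))%nat with k in H by lia.
  replace (m + (k - m - 1))%nat with (k - 1)%nat in H by lia.
  rewrite <- H. destruct m as [|d]; [lia|]. replace k with (S (k - 1)) at 1 by lia.
  rewrite adm_comps_bump, map_map. reflexivity.
Qed.

Theorem theorem1p1 (k n : nat) (hn : (1 <= n)%nat) (hk : (n < k)%nat) (t : R) :
  sum_list (map (zeta_t t) (adm_comps n k)) =
  sum_f_R0 (fun j => C (k - 1) j * t ^ j * (1 - t) ^ (n - 1 - j)) (n - 1)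
    * mzv [k].
Proof.
  change (zeta_t t) with (merge_sum t mzv).
  rewrite adm_merge_sum_expand by lia.
  rewrite (sumR_ext n _ (fun m => mzv [k] * coef t (k - 1) n m))
    by (intros m Hm; rewrite sum_formula by lia; ring).
  rewrite sumR_scal, coef_total by lia. ring.
Qed.
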